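(* Let $A=K[X_1,\ldots,X_n]$ over a field $K$, let $I,J\subseteq A$ be homogeneous ideals with the same Hilbert function, let $\prec$ be a monomial order, and let $G_1$ and $G_2$ be the reduced Gr\''obner bases with respect to $\prec$ of $I$ and $J$ respectively. If $d$ is an integer greater than or equal to the largest degree of an element of $G_1$ and $\operatorname{cs}(I_{\leq d})=\operatorname{cs}(J_{\leq d})$, then $\operatorname{supp}(G_1)=\operatorname{supp}(G_2)$.
   Context: For a nonzero polynomial $f$, $\operatorname{supp}(f)$ is the set of monomials appearing in $f$ with nonzero coefficient; for a set $S$ of polynomials, $\operatorname{supp}(S)=\{\operatorname{supp}(f):f\in S, f\ne0\}$, and the circuits set $\operatorname{cs}(S)$ is the set of inclusion-minimal elements of $\operatorname{supp}(S)$. For a homogeneous ideal $I$, $I_{\leq d}=\bigoplus_{j\le d} I_j$ is the sum of its homogeneous components of degree at most $d$. A reduced Gr\''obner basis is a Gr\''obner basis whose elements are monic and such that no leading monomial of one element divides a monomial in the support of another element. *)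

From HB Require Import structures.
From mathcomp Require Import all_boot all_order all_algebra.
From mathcomp Require Import finmap.
From mathcomp Require Import mpoly.
From Stdlib Require Import Relations Wellfounded.

Set Implicit Arguments.
Unset Strict Implicit.
Unset Printing Implicit Defensive.

Import Order.TTheory GRing.Theory Num.Theory.
Local Open Scope ring_scope.


Section Defs.
Variables (K : fieldType) (n : nat).
Local Notation A := {mpoly K[n]}.
Local Notation M := ('X_{1..n}).

Definition mdegz (m : M) : int := (mdeg m)%:Z.

Definition hcomp (j : int) (f : A) : A :=
  \sum_(m <- msupp f | mdegz m == j) f@_m *: 'X_[m].

(* f is homogeneous of degree j (0 counts as homogeneous of every degree) *)
Definition is_homog_deg (j : int) (f : A) : Prop :=
  forall m, m \in msupp f -> mdegz m = j.

Definition is_ideal (I : A -> Prop) : Prop :=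
  [/\ I 0,
      (forall f g, I f -> I g -> I (f + g)) &
      (forall f g, I f -> I (g * f))].

Definition homogeneous_ideal (I : A -> Prop) : Prop :=
  is_ideal I /\ (forall f j, I f -> I (hcomp j f)).

Definition lincomb (b : seq A) (c : nat -> K) : A :=
  \sum_(i < size b) c i *: b`_i.

(* the degree-j part (A/I)_j of A/I has dimension r:
   there are r homogeneous polynomials of degree j whose classes form a
   basis of A_j / I_j *)
Definition hilbert_value (I : A -> Prop) (j : int) (r : nat) : Prop :=
  exists b : seq A,
    [/\ size b = r,
        (forall g, g \in b -> is_homog_deg j g),
        (forall c : nat -> K, I (lincomb b c) ->
            forall i, (i < size b)%N -> c i = 0) &
        (forall f, is_homog_deg j f ->
            exists c : nat -> K, exists g : A,
              [/\ I g, is_homog_deg j g & f = lincomb b c + g])].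

Definition same_hilbert_function (I J : A -> Prop) : Prop :=
  forall (j : int) (r : nat), hilbert_value I j r <-> hilbert_value J j r.

Definition monomial_order (le : M -> M -> bool) : Prop :=
  [/\ forall m, le m m,
      (forall m1 m2, le m1 m2 -> le m2 m1 -> m1 = m2),
      (forall m1 m2 m3, le m1 m2 -> le m2 m3 -> le m1 m3),
      (forall m1 m2, le m1 m2 || le m2 m1) &
      ((forall m1 m2 m, le m1 m2 -> le (m1 + m)%MM (m2 + m)%MM) /\
       well_founded (fun m1 m2 => le m1 m2 && (m1 != m2)))].

Definition is_lm (le : M -> M -> bool) (f : A) (m : M) : Prop :=
  m \in msupp f /\ forall m', m' \in msupp f -> le m' m.

Definition groebner_basis (le : M -> M -> bool) (I : A -> Prop) (G : seq A)
  : Prop :=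
  (forall g, g \in G -> I g) /\
  (forall f, I f -> f != 0 -> forall mf, is_lm le f mf ->
     exists2 g, g \in G & exists mg, is_lm le g mg /\ (mg <= mf)%MM).

Definition reduced_groebner_basis (le : M -> M -> bool) (I : A -> Prop)
  (G : seq A) : Prop :=
  [/\ groebner_basis le I G,
      (forall g, g \in G -> exists m, is_lm le g m /\ g@_m = 1) &
      (forall g g', g \in G -> g' \in G -> g != g' ->
         forall mg, is_lm le g mg ->
         forall m, m \in msupp g' -> ~~ (mg <= m)%MM)].

Definition tdeg (f : A) : nat := \max_(m <- msupp f) mdeg m.

(* I_{<= d} = sum of the homogeneous components I_j with j <= d *)
Definition ideal_le (I : A -> Prop) (d : int) (f : A) : Prop :=
  (forall j, I (hcomp j f)) /\ (forall m, m \in msupp f -> mdegz m <= d).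

Definition supp (f : A) : {fset M} := [fset m | m in msupp f]%fset.

Definition supps (S : A -> Prop) (s : {fset M}) : Prop :=
  exists f, [/\ S f, f != 0 & supp f = s].

Definition circuits (S : A -> Prop) (s : {fset M}) : Prop :=
  supps S s /\ (forall t, supps S t -> (t `<=` s)%fset -> t = s).

End Defs.

From HB Require Import structures.
From mathcomp Require Import all_boot all_order all_algebra.
From mathcomp Require Import finmap.
From mathcomp Require Import mpoly.

Set Implicit Arguments.
Unset Strict Implicit.
Unset Printing Implicit Defensive.

Import Order.TTheory GRing.Theory Num.Theory.
Local Open Scope ring_scope.

(* Each g in G1 has degree at most d and, being an element of a reduced Groebner
   basis, its support is minimal among supports of nonzero elements of I; so supp g
   is a circuit of I_{<= d}, hence of J_{<= d}, and J contains an element with the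
   same support and leading monomial.  Thus LT(I) is contained in LT(J).  In each
   degree the standard monomials of a Groebner basis form a basis of A_j / I_j, so
   equal Hilbert functions force LT(I) = LT(J), and G1, G2 have the same leading
   monomials.  Finally the element of J with the support of g1 has only standard
   monomials besides lm g1, hence is a multiple of the g2 with lm g2 = lm g1. *)

Section RelMax.
Variables (T : eqType) (le : rel T).
Hypotheses (le_refl : reflexive le) (le_trans : transitive le) (le_total : total le).

Definition rmax (x0 : T) (s : seq T) : T :=
  foldr (fun a m => if le m a then a else m) x0 s.

Lemma rmax_mem x0 s : rmax x0 s \in x0 :: s.
Proof.
elim: s => [|a s IHs] /=; first exact: mem_head.
case: ifP => _; rewrite !inE ?eqxx ?orbT //.
by move: IHs; rewrite inE => /orP[->|->]; rewrite ?orbT.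
Qed.

Lemma rmax_ub x0 s y : y \in x0 :: s -> le y (rmax x0 s).
Proof.
elim: s y => [|a s IHs] y /=; first by rewrite mem_seq1 => /eqP->.
have IHs' z : z \in s -> le z (rmax x0 s) by move=> zs; apply: IHs; rewrite inE zs orbT.
case: ifP => [le_ma|/negbT le_am]; rewrite !inE => /or3P[/eqP->|/eqP->|ys].
- exact: le_trans (IHs _ (mem_head _ _)) le_ma.
- exact: le_refl.
- exact: le_trans (IHs' _ ys) le_ma.
- exact: IHs (mem_head _ _).
- by have := le_total (rmax x0 s) a; rewrite (negbTE le_am).
- exact: IHs'.
Qed.

Lemma rmax_exists (s : seq T) x : x \in s ->
  exists2 m, m \in s & forall y, y \in s -> le y m.
Proof.
case: s => // a s _; exists (rmax a s); first exact: rmax_mem.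
exact: rmax_ub.
Qed.
End RelMax.

Lemma count_lt_subpred (T : eqType) (s : seq T) (p q : pred T) :
  {in s, subpred p q} -> (exists2 x, x \in s & q x && ~~ p x) ->
  (count p s < count q s)%N.
Proof.
move=> pq [x xs /andP[qx npx]].
rewrite -[count q s]size_filter -(count_predC p) count_filter.
rewrite (eq_in_count (a2 := p)); last first.
  by move=> y ys /=; case py: (p y); rewrite ?(pq y ys py).
rewrite -[X in (X < _)%N]addn0 ltn_add2l -has_count; apply/hasP; exists x => //.
by rewrite mem_filter qx.
Qed.

Section MonomialOrder.
Variables (n : nat) (le : 'X_{1..n} -> 'X_{1..n} -> bool).
Hypothesis le_mo : monomial_order le.

Lemma mo_refl : reflexive le. Proof. by case: le_mo. Qed.
Lemma mo_anti m1 m2 : le m1 m2 -> le m2 m1 -> m1 = m2.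
Proof. by case: le_mo => _ anti _ _ _; apply: anti. Qed.
Lemma mo_trans : transitive le.
Proof. by case: le_mo => _ _ tr _ _ m2 m1 m3; apply: tr. Qed.
Lemma mo_total : total le. Proof. by case: le_mo. Qed.
Lemma mo_addr m1 m2 m : le m1 m2 -> le (m1 + m)%MM (m2 + m)%MM.
Proof. by case: le_mo => _ _ _ _ [addr _]; apply: addr. Qed.
Lemma mo_wf : well_founded (fun m1 m2 => le m1 m2 && (m1 != m2)).
Proof. by case: le_mo => _ _ _ _ []. Qed.

(* Were [m < 0], the chain [0 > m > 2m > 3m > ...] would contradict well-foundedness. *)
Lemma mo_ge0 m : le 0%MM m.
Proof.
case/orP: (mo_total 0%MM m) => // le_m0.
have [->|m_neq0] := eqVneq m 0%MM; first exact: mo_refl.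
pose chain i := iter i (fun x => (x + m)%MM) 0%MM.
suff chain_nacc x : Acc (fun m1 m2 => le m1 m2 && (m1 != m2)) x -> forall i, x <> chain i.
  by have := chain_nacc _ (mo_wf 0%MM) 0%N.
elim=> {}x _ IHx i x_eq; apply: (IHx (chain i.+1) _ i.+1 erefl); rewrite x_eq /=.
rewrite -[X in le _ X]add0m [(_ + m)%MM]addmC mo_addr //=.
by rewrite -[X in _ != X]add0m (inj_eq (@addIm _ _)).
Qed.

Lemma mo_lt_le_trans m1 m2 m3 :
  le m1 m2 && (m1 != m2) -> le m2 m3 -> le m1 m3 && (m1 != m3).
Proof.
case/andP=> le12 ne12 le23; rewrite (mo_trans le12 le23); apply: contraNneq ne12 => eq13.
by apply/eqP/mo_anti => //; rewrite eq13.
Qed.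

Lemma lepm_mo m1 m2 : (m1 <= m2)%MM -> le m1 m2.
Proof. by move/submK <-; rewrite -[X in le X _]add0m mo_addr ?mo_ge0. Qed.

End MonomialOrder.

Lemma lepm_anti n (m1 m2 : 'X_{1..n}) : (m1 <= m2)%MM -> (m2 <= m1)%MM -> m1 = m2.
Proof.
move=> /mnm_lepP le12 /mnm_lepP le21; apply/mnmP => i.
by apply/anti_leq; rewrite le12 le21.
Qed.

Section Polynomials.
Variables (K : fieldType) (n : nat).
Local Notation A := {mpoly K[n]}.
Local Notation M := 'X_{1..n}.

Lemma in_supp (f : A) m : (m \in supp f) = (m \in msupp f).
Proof. by rewrite in_fset. Qed.

Lemma eq_supp (f g : A) : msupp f =i msupp g -> supp f = supp g.
Proof. by move=> eq_fg; apply/fsetP => m; rewrite !in_supp eq_fg. Qed.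

Section Ideal.
Variable I : A -> Prop.
Hypothesis idI : is_ideal I.

Lemma ideal0 : I 0. Proof. by case: idI. Qed.
Lemma idealD f g : I f -> I g -> I (f + g). Proof. by case: idI => _ D _; apply: D. Qed.
Lemma idealMl f g : I f -> I (g * f). Proof. by case: idI => _ _ Ml; apply: Ml. Qed.
Lemma idealZ c f : I f -> I (c *: f). Proof. by rewrite -mul_mpolyC; apply: idealMl. Qed.
Lemma idealB f g : I f -> I g -> I (f - g).
Proof. by move=> If Ig; rewrite -scaleN1r; apply/idealD/idealZ. Qed.
Lemma ideal_sum (T : Type) (r : seq T) (P : pred T) (F : T -> A) :
  (forall i, P i -> I (F i)) -> I (\sum_(i <- r | P i) F i).
Proof. exact: (big_ind I ideal0 idealD). Qed.

End Ideal.

Lemma hcompE j (f : A) m : (hcomp j f)@_m = if mdegz m == j then f@_m else 0.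
Proof.
rewrite /hcomp raddf_sum /=.
under eq_bigr => m' _ do rewrite mcoeffZ mcoeffX.
rewrite big_mkcond /=.
have [fm|fNm] := boolP (m \in msupp f); last first.
  rewrite (memN_msupp_eq0 fNm) if_same big1 // => m' _.
  by case: ifP => // _; case: eqP => [->|_]; rewrite ?(memN_msupp_eq0 fNm) ?mul0r ?mulr0.
rewrite (bigD1_seq m) ?msupp_uniq //= eqxx mulr1 big1 ?addr0 // => m' ne.
case: ifP => // _; case: eqP => [eq_m|_]; last by rewrite mulr0.
by rewrite eq_m eqxx in ne.
Qed.

Lemma hcomp_homog j (f : A) : is_homog_deg j (hcomp j f).
Proof. by move=> m; rewrite mcoeff_msupp hcompE; case: ifP => [/eqP//|_]; rewrite eqxx. Qed.

Lemma sum_hcomp (f : A) : \sum_(k < msize f) hcomp k%:Z f = f.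
Proof.
apply/mpolyP => m; rewrite raddf_sum /=.
under eq_bigr => k _ do rewrite hcompE.
have [fm|/memN_msupp_eq0->] := boolP (m \in msupp f); last first.
  by rewrite big1 // => k _; rewrite if_same.
rewrite (bigD1 (Ordinal (msize_mdeg_lt fm))) //= eqxx big1 ?addr0 // => k ne.
case: eqP => // -[mk]; case/eqP: ne; exact: val_inj.
Qed.

Lemma homog_deg0 j : is_homog_deg j (0 : A).
Proof. by move=> m; rewrite msupp0. Qed.
Lemma homog_degD j (f g : A) :
  is_homog_deg j f -> is_homog_deg j g -> is_homog_deg j (f + g).
Proof. by move=> hf hg m /msuppD_le; rewrite mem_cat => /orP[/hf|/hg]. Qed.
Lemma homog_degB j (f g : A) :
  is_homog_deg j f -> is_homog_deg j g -> is_homog_deg j (f - g).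
Proof. by move=> hf hg m /msuppB_le; rewrite mem_cat => /orP[/hf|/hg]. Qed.
Lemma homog_degZ j c (f : A) : is_homog_deg j f -> is_homog_deg j (c *: f).
Proof. by move=> hf m /msuppZ_le /hf. Qed.

Section HomogeneousIdeal.
Variable I : A -> Prop.
Hypothesis homI : homogeneous_ideal I.

Lemma homog_ideal_ideal : is_ideal I. Proof. by case: homI. Qed.
Lemma homog_ideal_hcomp f j : I f -> I (hcomp j f). Proof. by case: homI => _; apply. Qed.

Lemma ideal_le_mem d f : ideal_le I d f -> I f.
Proof.
by case=> Ihcomp _; rewrite -[f]sum_hcomp; apply: (ideal_sum homog_ideal_ideal).
Qed.

End HomogeneousIdeal.

Definition monomials_of_deg (j : nat) : seq M :=
  [seq m <- [seq bmnm b | b <- enum {: 'X_{1..n < j.+1}}] | mdeg m == j].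

Lemma monomials_of_deg_uniq j : uniq (monomials_of_deg j).
Proof. by rewrite filter_uniq // map_inj_uniq ?enum_uniq //; apply: val_inj. Qed.

Lemma mem_monomials_of_deg j m : (m \in monomials_of_deg j) = (mdeg m == j).
Proof.
rewrite mem_filter andb_idr // => /eqP deg_m; have lt_m : (mdeg m < j.+1)%N by rewrite deg_m.
by apply/mapP; exists (BMultinom lt_m); rewrite ?mem_enum.
Qed.

Lemma mcoeff_lincombX (s : seq M) c m : uniq s ->
  (lincomb [seq 'X_[m'] : A | m' <- s] c)@_m = if m \in s then c (index m s) else 0.
Proof.
move=> s_uniq; rewrite /lincomb raddf_sum /= size_map.
under eq_bigr => i _ do rewrite (nth_map 0%MM) // mcoeffZ mcoeffX.
have [ms|ms] := ifP; last first.
  rewrite big1 // => i _; case: eqP => [eq_m|_]; last by rewrite mulr0.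
  by rewrite -eq_m mem_nth in ms.
rewrite (bigD1 (Ordinal (etrans (index_mem m s) ms))) //= nth_index // eqxx mulr1.
rewrite big1 ?addr0 // => i ne; case: eqP => [eq_m|_]; last by rewrite mulr0.
by case/eqP: ne; apply: val_inj; rewrite /= -eq_m index_uniq.
Qed.

(* Reducing the [b_i] modulo [J] gives a [size b] x [size a] coordinate matrix of
   full row rank. *)
Lemma ideal_indep_size_le (J : A -> Prop) (b a : seq A) : is_ideal J ->
  (forall c, J (lincomb b c) -> forall i, (i < size b)%N -> c i = 0) ->
  (forall i, (i < size b)%N -> exists c, exists2 g, J g & b`_i = lincomb a c + g) ->
  (size b <= size a)%N.
Proof.
move=> idJ b_indep b_span.
pose coef r (v : 'rV[K]_r) l := if insub l is Some t then v 0 t else 0.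
have coefE r v (t : 'I_r) : coef r v t = v 0 t by rewrite /coef valK.
have /fin_all_exists[V J_V] : forall i : 'I_(size b),
    exists v : 'rV[K]_(size a), J (b`_i - lincomb a (coef _ v)).
  move=> i; have [c [g Jg ->]] := b_span i (ltn_ord i).
  exists (\row_l c l); rewrite addrC.
  suff -> : lincomb a (coef (size a) (\row_l c l)) = lincomb a c by rewrite addKr.
  by rewrite /lincomb; apply: eq_bigr => l _; rewrite coefE mxE.
pose C := \matrix_(i, l) V i 0 l.
have lincomb_C x : x *m C = 0 -> \sum_(i < size b) x 0 i *: lincomb a (coef _ (V i)) = 0.
  move=> xC0; under eq_bigr => i _ do rewrite /lincomb scaler_sumr.
  rewrite exchange_big /=; apply: big1 => l _.
  under eq_bigr => i _ do rewrite scalerA coefE.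
  have : (x *m C) 0 l = 0 by rewrite xC0 mxE.
  by rewrite -scaler_suml mxE; under eq_bigr => i _ do rewrite mxE; move=> ->; rewrite scale0r.
suff /eqP <- : row_free C by exact: rank_leq_col.
apply: inj_row_free => x xC0; apply/rowP => k; rewrite mxE -coefE.
apply: b_indep (ltn_ord k).
suff -> : lincomb b (coef _ x) =
    \sum_(i < size b) x 0 i *: (b`_i - lincomb a (coef _ (V i))).
  by apply: ideal_sum => // i _; apply: idealZ.
under [RHS]eq_bigr => i _ do rewrite scalerBr.
by rewrite sumrB lincomb_C // subr0 /lincomb; apply: eq_bigr => i _; rewrite coefE.
Qed.

Section LeadingMonomial.
Variable le : M -> M -> bool.
Hypothesis le_mo : monomial_order le.

Definition lm (f : A) : M := if msupp f is m :: s then rmax le m s else 0%MM.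

Lemma lmP (f : A) : f != 0 -> is_lm le f (lm f).
Proof.
rewrite -msupp_eq0 /lm /is_lm; case: (msupp f) => [|m s] // _.
split; first exact: rmax_mem.
exact: (rmax_ub (mo_refl le_mo) (mo_trans le_mo) (mo_total le_mo)).
Qed.

Lemma lm_msupp (f : A) : f != 0 -> lm f \in msupp f.
Proof. by case/lmP. Qed.

Lemma is_lm_neq0 (f : A) m : is_lm le f m -> f != 0.
Proof. by case=> fm _; apply: contraTneq fm => ->; rewrite msupp0. Qed.

Lemma is_lm_lm (f : A) m : is_lm le f m -> lm f = m.
Proof.
move=> lm_m; have [lm_in lm_max] := lmP (is_lm_neq0 lm_m); case: lm_m => m_in m_max.
by apply: (mo_anti le_mo); [apply: m_max | apply: lm_max].
Qed.

Lemma lm_eq_msupp (f g : A) : msupp f =i msupp g -> g != 0 -> lm f = lm g.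
Proof.
move=> eq_fg g_neq0; apply: is_lm_lm; have [lm_in lm_max] := lmP g_neq0.
by split=> [|m]; rewrite eq_fg //; apply: lm_max.
Qed.

Definition standard (G : seq A) (m : M) : bool :=
  ~~ has (fun g => (g != 0) && (lm g <= m)%MM) G.

Lemma nonstandardP (G : seq A) m :
  reflect (exists2 g, g \in G & (g != 0) && (lm g <= m)%MM) (~~ standard G m).
Proof. by rewrite negbK; apply: hasP. Qed.

Lemma lm_nonstandard (G : seq A) (g : A) : g \in G -> g != 0 -> ~~ standard G (lm g).
Proof. by move=> gG g_neq0; apply/nonstandardP; exists g; rewrite ?g_neq0 ?lepm_refl. Qed.

Lemma nonstandard_max (G : seq A) (f : A) : ~~ all (standard G) (msupp f) ->
  exists m, [/\ m \in msupp f, ~~ standard G m &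
    forall m', m' \in msupp f -> ~~ standard G m' -> le m' m].
Proof.
case/allPn=> m0 fm0 nstd_m0.
have m0_in : m0 \in [seq m <- msupp f | ~~ standard G m] by rewrite mem_filter nstd_m0.
have [m] := rmax_exists (mo_refl le_mo) (mo_trans le_mo) (mo_total le_mo) m0_in.
rewrite mem_filter => /andP[nstd_m fm] m_max; exists m; split=> // m' fm' nstd_m'.
by apply: m_max; rewrite mem_filter nstd_m'.
Qed.

Section Groebner.
Variables (I : A -> Prop) (G : seq A).
Hypothesis gbG : groebner_basis le I G.

Lemma groebner_mem (g : A) : g \in G -> I g. Proof. by case: gbG => memG _; apply: memG. Qed.

Lemma ideal_lm_nonstandard (f : A) : I f -> f != 0 -> ~~ standard G (lm f).
Proof.
move=> If f_neq0; case: gbG => _ /(_ f If f_neq0 _ (lmP f_neq0)) [g gG [mg [lm_mg le_mg]]].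
by apply/nonstandardP; exists g; rewrite ?(is_lm_neq0 lm_mg) ?(is_lm_lm lm_mg).
Qed.

Lemma ideal_standard_eq0 (f : A) : I f -> all (standard G) (msupp f) -> f = 0.
Proof.
move=> If /allP f_std; apply/eqP; apply: contraT => f_neq0.
by have /negP[] := ideal_lm_nonstandard If f_neq0; apply/f_std/lm_msupp.
Qed.

Lemma standard_lincombX_indep s : uniq s -> all (standard G) s ->
  forall c, I (lincomb [seq 'X_[m] | m <- s] c) -> forall i, (i < size s)%N -> c i = 0.
Proof.
move=> s_uniq s_std c Ic i lt_i_s.
have comb0 : lincomb [seq 'X_[m] | m <- s] c = 0.
  apply: ideal_standard_eq0 Ic _; apply/allP => m; rewrite mcoeff_msupp mcoeff_lincombX //.
  by case: ifP => [ms _|_]; [apply: (allP s_std) | rewrite eqxx].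
have := congr1 (mcoeff (nth 0%MM s i)) comb0.
by rewrite mcoeff_lincombX // mem_nth // index_uniq // mcoeff0.
Qed.

End Groebner.

Section HomogeneousGroebner.
Variables (I : A -> Prop) (G : seq A).
Hypotheses (homI : homogeneous_ideal I) (gbG : groebner_basis le I G).
Let idI : is_ideal I := homog_ideal_ideal homI.

Lemma nonstandard_homog_witness j m : mdegz m = j -> ~~ standard G m ->
  exists h, [/\ I h, is_homog_deg j h, m \in msupp h &
    forall m', m' \in msupp h -> le m' m].
Proof.
move=> deg_m /nonstandardP[g gG /andP[g_neq0 lm_dvd]].
have [lm_in lm_max] := lmP g_neq0.
pose k := (m - lm g)%MM; have m_eq : (k + lm g)%MM = m by apply: submK.
exists (hcomp j (g * 'X_[k])); split.
- apply: (homog_ideal_hcomp homI); rewrite mulrC; apply: (idealMl idI).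
  exact: (groebner_mem gbG gG).
- exact: hcomp_homog.
- by rewrite mcoeff_msupp hcompE deg_m eqxx -m_eq mcoeffMX -mcoeff_msupp.
move=> m'; rewrite mcoeff_msupp hcompE; case: ifP => _; last by rewrite eqxx.
rewrite -mcoeff_msupp (perm_mem (msuppMX g k)) => /mapP[m'' /lm_max le_m'' ->].
by rewrite -m_eq ![(k + _)%MM]addmC mo_addr.
Qed.

Lemma top_reduction j (f : A) m : is_homog_deg j f -> m \in msupp f -> ~~ standard G m ->
  (forall m', m' \in msupp f -> ~~ standard G m' -> le m' m) ->
  exists h, [/\ I h, is_homog_deg j h &
    forall m', m' \in msupp (f - h) -> ~~ standard G m' -> le m' m && (m' != m)].
Proof.
move=> homf fm nstd_m le_m.
have [h [Ih homh hm h_le]] := nonstandard_homog_witness (homf _ fm) nstd_m.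
have hm_neq0 : h@_m != 0 by rewrite -mcoeff_msupp.
exists ((f@_m / h@_m) *: h); split; [exact: idealZ | exact: homog_degZ |].
move=> m' fhm' nstd_m'; have -> : m' != m.
  by apply: contraTneq fhm' => ->; rewrite mcoeff_msupp mcoeffB mcoeffZ divfK // subrr eqxx.
by move/msuppB_le: fhm'; rewrite mem_cat andbT => /orP[/le_m|/msuppZ_le/h_le]; apply.
Qed.

Lemma homog_normal_form j (f : A) : is_homog_deg j f ->
  exists g, [/\ I g, is_homog_deg j g & all (standard G) (msupp (f - g))].
Proof.
have standard_nf p : all (standard G) (msupp p) ->
    exists g, [/\ I g, is_homog_deg j g & all (standard G) (msupp (p - g))].
  by exists 0; rewrite subr0; split=> //; [apply: ideal0 | apply: homog_deg0].
move=> homf.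
have [/standard_nf //|/nonstandard_max[m0 [_ _]]] := boolP (all (standard G) (msupp f)).
elim/(well_founded_ind (mo_wf le_mo)): m0 f homf => m0 IHm0 f homf le_m0.
have [/standard_nf //|/nonstandard_max[m [fm nstd_m le_m]]] :=
  boolP (all (standard G) (msupp f)).
have [h [Ih homh lt_m]] := top_reduction homf fm nstd_m le_m.
have [fh_std|/nonstandard_max[m' [fhm' nstd_m' le_m']]] :=
  boolP (all (standard G) (msupp (f - h))); first by exists h.
have [|g [Ig homg fhg_std]] := IHm0 m' _ (f - h) (homog_degB homf homh) le_m'.
  exact: mo_lt_le_trans (lt_m _ fhm' nstd_m') (le_m0 _ fm nstd_m).
by exists (h + g); rewrite opprD addrA; split=> //; [apply: idealD | apply: homog_degD].
Qed.

Definition standard_monomials j : seq M := [seq m <- monomials_of_deg j | standard G m].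

Lemma standard_monomials_uniq j : uniq (standard_monomials j).
Proof. exact/filter_uniq/monomials_of_deg_uniq. Qed.

Lemma homog_standard_span j (f : A) : is_homog_deg j%:Z f ->
  exists c g, [/\ I g, is_homog_deg j%:Z g &
    f = lincomb [seq 'X_[m] | m <- standard_monomials j] c + g].
Proof.
move=> homf; have [g [Ig homg fg_std]] := homog_normal_form homf.
exists (fun i => (f - g)@_(nth 0%MM (standard_monomials j) i)), g; split=> //.
rewrite -[LHS](subrK g); congr (_ + _); apply/mpolyP => m.
rewrite mcoeff_lincombX ?standard_monomials_uniq //.
case: ifP => [mS|mNS]; first by rewrite nth_index.
apply/eqP; rewrite mcoeff_eq0; apply: contraFN mNS => fgm.
rewrite mem_filter (allP fg_std _ fgm) mem_monomials_of_deg.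
by have /eqP := homog_degB homf homg fgm; rewrite eqz_nat => ->.
Qed.

Lemma hilbert_value_standard j : hilbert_value I j%:Z (size (standard_monomials j)).
Proof.
exists [seq 'X_[m] | m <- standard_monomials j]; split.
- by rewrite size_map.
- move=> _ /mapP[m + ->] m'; rewrite mem_filter mem_monomials_of_deg msuppX mem_seq1.
  by case/andP=> _ /eqP deg_m /eqP ->; rewrite /mdegz deg_m.
- rewrite size_map.
  exact: (standard_lincombX_indep gbG (standard_monomials_uniq j) (filter_all _ _)).
- by move=> f homf; apply: homog_standard_span.
Qed.

Lemma hilbert_value_le_standard j r :
  hilbert_value I j%:Z r -> (r <= size (standard_monomials j))%N.
Proof.
case=> b [<- homb b_indep _].
suff : (size b <= size [seq 'X_[m] : A | m <- standard_monomials j])%N by rewrite size_map.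
apply: ideal_indep_size_le idI b_indep _ => i lt_i.
have [c [g [Ig _ ->]]] := homog_standard_span (homb _ (mem_nth 0 lt_i)).
by exists c, g.
Qed.

End HomogeneousGroebner.

Section Reduced.
Variables (I : A -> Prop) (G : seq A).
Hypothesis rgbG : reduced_groebner_basis le I G.

Lemma reduced_groebner : groebner_basis le I G. Proof. by case: rgbG. Qed.

Lemma reduced_neq0 (g : A) : g \in G -> g != 0.
Proof. by case: rgbG => _ monic _ /monic[m [/is_lm_neq0]]. Qed.

Lemma reduced_lm_coef (g : A) : g \in G -> g@_(lm g) = 1.
Proof. by case: rgbG => _ monic _ /monic[m [lm_m <-]]; rewrite (is_lm_lm lm_m). Qed.

Lemma reduced_lm_ndvd (g g' : A) m :
  g \in G -> g' \in G -> g != g' -> m \in msupp g' -> ~~ (lm g <= m)%MM.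
Proof.
case: rgbG => _ _ red gG g'G ne g'm.
exact: red gG g'G ne _ (lmP (reduced_neq0 gG)) _ g'm.
Qed.

Lemma reduced_tail_standard (g : A) m : g \in G -> m \in msupp g -> m != lm g -> standard G m.
Proof.
move=> gG gm; apply: contraNT => /nonstandardP[g' g'G /andP[_ dvd]].
have [eq_g|ne_g] := eqVneq g' g; last by have := reduced_lm_ndvd g'G gG ne_g gm; rewrite dvd.
rewrite eq_g in dvd; apply/eqP/(mo_anti le_mo); last exact: lepm_mo.
exact: (lmP (reduced_neq0 gG)).2.
Qed.

Lemma reduced_lm_minimal (g : A) m : g \in G -> (m <= lm g)%MM -> ~~ standard G m -> m = lm g.
Proof.
move=> gG dvd /nonstandardP[g' g'G /andP[_ dvd']].
have [eq_g|ne_g] := eqVneq g' g; first by rewrite eq_g in dvd'; apply: lepm_anti.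
have := reduced_lm_ndvd g'G gG ne_g (lm_msupp (reduced_neq0 gG)).
by rewrite (lepm_trans dvd' dvd).
Qed.

Hypothesis idI : is_ideal I.

Lemma reduced_eq_scale (g h : A) : g \in G -> I h ->
  (forall m, m \in msupp h -> m != lm g -> standard G m) -> h = h@_(lm g) *: g.
Proof.
move=> gG Ih h_std; apply/eqP; rewrite -subr_eq0; apply/eqP.
apply: (ideal_standard_eq0 reduced_groebner).
  apply: (idealB idI) Ih _; apply: (idealZ idI); exact: (groebner_mem reduced_groebner gG).
apply/allP => m hgm; have ne : m != lm g.
  apply: contraTneq hgm => ->.
  by rewrite mcoeff_msupp mcoeffB mcoeffZ reduced_lm_coef // mulr1 subrr eqxx.
move/msuppB_le: hgm; rewrite mem_cat => /orP[/h_std|/msuppZ_le/reduced_tail_standard];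
  exact.
Qed.

Lemma reduced_supp_eq (g h : A) : g \in G -> I h -> h != 0 ->
  (forall m, m \in msupp h -> m != lm g -> standard G m) -> msupp h =i msupp g.
Proof.
move=> gG Ih h_neq0 h_std; have h_eq := reduced_eq_scale gG Ih h_std.
have c_neq0 : h@_(lm g) != 0 by apply: contraNneq h_neq0 => c0; rewrite h_eq c0 scale0r.
by rewrite h_eq; apply/perm_mem/msuppZ.
Qed.

End Reduced.

Lemma reduced_circuit (I : A -> Prop) (G : seq A) d (g : A) :
  homogeneous_ideal I -> reduced_groebner_basis le I G ->
  g \in G -> ((tdeg g)%:Z <= d)%R -> circuits (ideal_le I d) (supp g).
Proof.
move=> homI rgbG gG deg_g; split.
  exists g; split; [split=> [j|m gm] | exact: (reduced_neq0 rgbG gG) | by []].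
  - apply: (homog_ideal_hcomp homI); exact: (groebner_mem (reduced_groebner rgbG) gG).
  - by apply: le_trans deg_g; rewrite lez_nat; apply: leq_bigmax_seq.
move=> _ [f [/(ideal_le_mem homI) If f_neq0 <-]] /fsubsetP fg; apply: eq_supp.
apply: (reduced_supp_eq rgbG (homog_ideal_ideal homI) gG If f_neq0) => m fm.
by apply: (reduced_tail_standard rgbG gG); rewrite -in_supp fg ?in_supp.
Qed.

Lemma reduced_lm_match (I1 I2 : A -> Prop) (G1 G2 : seq A) :
  reduced_groebner_basis le I1 G1 -> reduced_groebner_basis le I2 G2 ->
  standard G1 =1 standard G2 ->
  forall g1, g1 \in G1 -> exists2 g2, g2 \in G2 & lm g2 = lm g1.
Proof.
move=> rgbG1 rgbG2 std12 g1 g1G.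
have := lm_nonstandard g1G (reduced_neq0 rgbG1 g1G).
rewrite std12 => /nonstandardP[g2 g2G /andP[g2_neq0 dvd]].
exists g2 => //; apply: (reduced_lm_minimal rgbG1 g1G dvd).
by rewrite std12; apply: lm_nonstandard.
Qed.

Section SameCircuits.
Variables (I J : A -> Prop) (G1 G2 : seq A) (d : int).
Hypotheses (homI : homogeneous_ideal I) (homJ : homogeneous_ideal J).
Hypotheses (rgbG1 : reduced_groebner_basis le I G1) (rgbG2 : reduced_groebner_basis le J G2).
Hypothesis deg_G1 : forall g, g \in G1 -> ((tdeg g)%:Z <= d)%R.
Hypothesis same_circuits :
  forall s, circuits (ideal_le I d) s <-> circuits (ideal_le J d) s.

Lemma G1_supp_in_J (g : A) : g \in G1 -> exists h, [/\ J h, h != 0 & msupp h =i msupp g].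
Proof.
move=> gG; have [[h [Jh h_neq0 supp_h]] _] :=
  (same_circuits _).1 (reduced_circuit homI rgbG1 gG (deg_G1 gG)).
exists h; split=> //; first exact: (ideal_le_mem homJ Jh).
by move=> m; rewrite -!in_supp supp_h.
Qed.

Lemma nonstandard_G1_G2 m : ~~ standard G1 m -> ~~ standard G2 m.
Proof.
case/nonstandardP=> g gG /andP[_ dvd]; have [h [Jh h_neq0 supp_h]] := G1_supp_in_J gG.
have /nonstandardP[g2 g2G /andP[g2_neq0 dvd2]] :=
  ideal_lm_nonstandard (reduced_groebner rgbG2) Jh h_neq0.
apply/nonstandardP; exists g2; rewrite // g2_neq0 (lepm_trans dvd2) //.
by rewrite (lm_eq_msupp supp_h (reduced_neq0 rgbG1 gG)).
Qed.

Hypothesis same_hilbert : same_hilbert_function I J.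

(* Both bases count the same Hilbert function in degree [mdeg m], and the standard
   monomials of [G2] are among those of [G1]; a standard monomial of [G1] that is not
   standard for [G2] would make the count for [G2] smaller. *)
Lemma standard_G1_G2 m : standard G1 m -> standard G2 m.
Proof.
move=> std1; have := hilbert_value_le_standard homJ (reduced_groebner rgbG2)
  ((same_hilbert _ _).1 (hilbert_value_standard homI (reduced_groebner rgbG1) (mdeg m))).
apply: contraLR => nstd2; rewrite !size_filter -ltnNge; apply: count_lt_subpred.
  by move=> m' _; apply: contraLR; apply: nonstandard_G1_G2.
by exists m; rewrite ?mem_monomials_of_deg ?std1.
Qed.

Lemma same_standard : standard G1 =1 standard G2.
Proof.
move=> m; apply/idP/idP; first exact: standard_G1_G2.
by apply: contraLR; apply: nonstandard_G1_G2.
Qed.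

Lemma G1_G2_supp_eq (g1 g2 : A) :
  g1 \in G1 -> g2 \in G2 -> lm g2 = lm g1 -> msupp g2 =i msupp g1.
Proof.
move=> g1G g2G lm_eq; have [h [Jh h_neq0 supp_h]] := G1_supp_in_J g1G.
move=> m; rewrite -supp_h (reduced_supp_eq rgbG2 (homog_ideal_ideal homJ) g2G Jh h_neq0) //.
move=> m' hm' ne; rewrite -same_standard; apply: (reduced_tail_standard rgbG1 g1G).
  by rewrite -supp_h.
by rewrite -lm_eq.
Qed.

End SameCircuits.
End LeadingMonomial.
End Polynomials.

Theorem proposition2p11 (K : fieldType) (n : nat)
  (I J : {mpoly K[n]} -> Prop) (le : 'X_{1..n} -> 'X_{1..n} -> bool)
  (G1 G2 : seq {mpoly K[n]}) (d : int) :
  homogeneous_ideal I -> homogeneous_ideal J ->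
  same_hilbert_function I J ->
  monomial_order le ->
  reduced_groebner_basis le I G1 ->
  reduced_groebner_basis le J G2 ->
  (forall g, g \in G1 -> ((tdeg g)%:Z <= d)%R) ->
  (forall s, circuits (ideal_le I d) s <-> circuits (ideal_le J d) s) ->
  forall s, supps (fun g => g \in G1) s <-> supps (fun g => g \in G2) s.
Proof.
move=> homI homJ same_hilbert le_mo rgbG1 rgbG2 deg_G1 same_circuits s.
have std12 := same_standard le_mo homI homJ rgbG1 rgbG2 deg_G1 same_circuits same_hilbert.
have supp12 := G1_G2_supp_eq le_mo homI homJ rgbG1 rgbG2 deg_G1 same_circuits same_hilbert.
split=> -[g [gG g_neq0 <-]].
- have [g2 g2G lm_eq] := reduced_lm_match le_mo rgbG1 rgbG2 std12 gG.
  exists g2; split=> //; first exact: (reduced_neq0 rgbG2 g2G).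
  by apply: eq_supp; apply: supp12.
- have [g1 g1G lm_eq] := reduced_lm_match le_mo rgbG2 rgbG1 (fsym std12) gG.
  exists g1; split=> //; first exact: (reduced_neq0 rgbG1 g1G).
  by apply: eq_supp => m; rewrite (supp12 g1 g) // lm_eq.
Qed.
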